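(* Let $L=E[C_1,\dots,C_n]$ be a congruence normal lattice (notation in the context). Then: (1) $L$ is join-extremal if and only if every $C_i$ is a lower pseudo-interval and, for every $i$, $C_i$ intersects the spine of $E[C_1,\dots,C_{i-1}]$. (2) $L$ is meet-extremal if and only if every $C_i$ is an upper pseudo-interval and, for every $i$, $C_i$ intersects the spine of $E[C_1,\dots,C_{i-1}]$. (3) $L$ is extremal if and only if every $C_i$ is an interval and, for every $i$, $C_i$ intersects the spine of $E[C_1,\dots,C_{i-1}]$.
   Context: All lattices are finite. A subset $C$ of a poset is convex if $x,y\in C$ implies $[x,y]\subseteq C$. For a convex subset $C$ of a lattice $L$, let $I_L(C)=\{y\in L\mid \exists x\in C,\ y\le x\}$. The doubling $L[C]$ is the subposet of $L\times\{0<1\}$ (product order) on the set $\big(I_L(C)\times\{0\}\big)\sqcup\big(((L\setminus I_L(C))\cup C)\times\{1\}\big)$; it is a lattice. $E[\,]$ denotes the one-element lattice and $E[C_1,\dots,C_{i+1}]:=E[C_1,\dots,C_i][C_{i+1}]$, where each $C_{i+1}$ is a nonempty convex subset of $E[C_1,\dots,C_i]$; a lattice of this form is congruence normal. A lower (resp. upper) pseudo-interval is a union of intervals sharing the same minimum (resp. maximum) element. The length $\ell(P)$ of a poset is the maximum number of elements of a chain minus one; the spine of $P$ is the set of elements lying on some chain of length $\ell(P)$. A lattice $L$ is join-extremal if $\ell(L)$ equals the number of join-irreducible elements (elements covering exactly one element), meet-extremal if $\ell(L)$ equals the number of meet-irreducible elements (elements covered by exactly one element), and extremal if both hold. *)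

(* By definition L[C] is a subposet of L x {0<1} (product order), and
   E[] is the one-element lattice, so E[C_1,...,C_k] is (literally) a
   subposet of {0,1}^k with the componentwise order.  We represent its
   elements as bit sequences of length k (the i-th bit is the {0<1}
   coordinate added by the i-th doubling), and a finite poset /
   subset as a list of such bit sequences. *)
From mathcomp Require Import all_boot.
Set Implicit Arguments. Unset Strict Implicit. Unset Printing Implicit Defensive.

Definition elt := seq bool.
Definition pset := seq elt.

Definition ble (x y : elt) : bool := all2 implb x y.
Definition blt (x y : elt) : bool := ble x y && (x != y).

Definition downset (L C : pset) : pset :=
  [seq y <- L | has (fun x => ble y x) C].

Definition double (L C : pset) : pset :=
  undup ([seq rcons y false | y <- [seq y <- L | y \in downset L C]] ++
         [seq rcons y true  | y <- [seq y <- L | (y \notin downset L C) || (y \in C)]]).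

Definition E0 : pset := [:: [::]].

Definition build (Cs : seq pset) : pset := foldl double E0 Cs.

Definition convex (L C : pset) : Prop :=
  forall x y z, x \in C -> y \in C -> z \in L -> ble x z -> ble z y -> z \in C.

(* Cs = [C_1; ...; C_n] is a valid congruence-normal construction:
   each C_{i+1} is a nonempty convex subset of E[C_1,...,C_i]
   (0-indexed: nth i Cs is a subset of build (take i Cs)). *)
Definition valid_cn (Cs : seq pset) : Prop :=
  forall i, i < size Cs ->
    [/\ nth [::] Cs i != [::],
        {subset nth [::] Cs i <= build (take i Cs)}
      & convex (build (take i Cs)) (nth [::] Cs i)].

Definition interval (L : pset) (a b : elt) : pset :=
  [seq z <- L | ble a z && ble z b].

Definition is_interval (L C : pset) : Prop :=
  exists a b, [/\ a \in L, b \in L, ble a b & C =i interval L a b].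

Definition lower_pseudo_interval (L C : pset) : Prop :=
  exists (a : elt) (bs : seq elt),
    [/\ a \in L, bs != [::], (forall b, b \in bs -> b \in L /\ ble a b)
      & (forall z, z \in C <-> exists2 b, b \in bs & z \in interval L a b)].

Definition upper_pseudo_interval (L C : pset) : Prop :=
  exists (b : elt) (as_ : seq elt),
    [/\ b \in L, as_ != [::], (forall a, a \in as_ -> a \in L /\ ble a b)
      & (forall z, z \in C <-> exists2 a, a \in as_ & z \in interval L a b)].

Definition is_chain (L : pset) (s : seq elt) : Prop :=
  all (mem L) s /\ sorted blt s.

Definition poset_length (L : pset) (l : nat) : Prop :=
  (exists s, is_chain L s /\ size s = l.+1) /\
  (forall s, is_chain L s -> size s <= l.+1).

Definition in_spine (L : pset) (x : elt) : Prop :=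
  exists l s, [/\ poset_length L l, is_chain L s, size s = l.+1 & x \in s].

Definition meets_spine (L C : pset) : Prop :=
  exists2 x, x \in C & in_spine L x.

Definition covb (L : pset) (y x : elt) : bool :=
  blt y x && ~~ has (fun z => blt y z && blt z x) L.

Definition n_join_irr (L : pset) : nat :=
  count (fun x => size [seq y <- undup L | covb L y x] == 1) (undup L).

Definition n_meet_irr (L : pset) : nat :=
  count (fun x => size [seq y <- undup L | covb L x y] == 1) (undup L).

Definition join_extremal (L : pset) : Prop := poset_length L (n_join_irr L).
Definition meet_extremal (L : pset) : Prop := poset_length L (n_meet_irr L).
Definition extremal (L : pset) : Prop := join_extremal L /\ meet_extremal L.

(* Write L' = L[C].  The join-irreducibles of L' are the copies of those of L,
   plus one new element (m,1) for every minimal element m of C; hence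
   n_join_irr L' = n_join_irr L + #min(C), and #min(C) = 1 exactly when the convex
   set C is a lower pseudo-interval (dually for meets, maximal elements and upper
   pseudo-intervals).  A longest chain of L through a point of C splits at that
   point into a chain of L' one element longer, while any chain of L' projects onto
   a chain of L losing at most one element, whose projection then lies in C; so
   l(L') = l(L) + 1 if C meets the spine of L, and l(L') = l(L) otherwise.  By
   induction along E[C_1,...,C_n], the defect n_join_irr - l is a sum of
   nonnegative contributions #min(C_i) - 1 and [C_i misses the spine], and it
   vanishes iff all of them do.  Finally, an interval is exactly a set that is both
   a lower and an upper pseudo-interval. *)

From Pilot Require Import Defs.
From mathcomp Require Import all_boot zify.
From Stdlib Require Import Classical_Prop.
(* Re-import so that [double] denotes the lattice doubling, not [ssrnat.double]. *)
Import Defs.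
Set Implicit Arguments. Unset Strict Implicit. Unset Printing Implicit Defensive.

Lemma count_addE (T : eqType) (a b c d : pred T) (s : seq T) :
  {in s, forall x, a x + b x = c x + d x} -> count a s + count b s = count c s + count d s.
Proof.
elim: s => //= x s IH h.
rewrite addnACA [RHS]addnACA h ?mem_head // IH // => y ys.
by apply: h; rewrite inE ys orbT.
Qed.

Lemma count_mem_eq1 (T : eqType) (s : seq T) x : uniq s -> x \in s -> count_mem x s = 1.
Proof. by move=> us xs; rewrite count_uniq_mem ?xs. Qed.

Lemma count_eq1_inj (T : eqType) (p : pred T) (s : seq T) x y :
  count p s = 1 -> x \in s -> y \in s -> p x -> p y -> x = y.
Proof.
rewrite -size_filter => s1 xs ys px py.
have: x \in filter p s by rewrite mem_filter px xs.
have: y \in filter p s by rewrite mem_filter py ys.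
by case: (filter p s) s1 => [|w [|]] //= _; rewrite !inE => /eqP-> /eqP->.
Qed.

(** * The componentwise order on bit vectors *)

Lemma ble_refl : reflexive ble.
Proof. by elim=> //= b x ->; rewrite implybb. Qed.

Lemma ble_trans : transitive ble.
Proof.
elim=> [|b y IH] [|a x] [|c z] //= /andP[ab xy] /andP[bc yz].
by rewrite (IH _ _ xy yz) andbT; case: a b c ab bc => [] [] [].
Qed.

Lemma ble_anti x y : ble x y -> ble y x -> x = y.
Proof.
elim: x y => [|a x IH] [|b y] //= /andP[ab xy] /andP[ba yx].
by rewrite (IH _ xy yx); case: a b ab ba => [] [].
Qed.

Lemma ble_rcons x y a b : ble (rcons x a) (rcons y b) = ble x y && (a ==> b).
Proof.
elim: x y => [|c x IH] [|d y] /=; rewrite ?andbT //.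
- by case: y => [|? ?]; rewrite /= ?andbF.
- by case: x {IH} => [|? ?]; rewrite /= ?andbF.
- by rewrite IH andbA.
Qed.

Definition wt (x : elt) := count id x.

Lemma ble_wt x y : ble x y -> wt x <= wt y.
Proof.
elim: x y => [|a x IH] [|b y] //= /andP[ab /IH].
by case: a b ab => [] [] //=; lia.
Qed.

Lemma ble_wt_eq x y : ble x y -> wt x = wt y -> x = y.
Proof.
elim: x y => [|a x IH] [|b y] //= /andP[ab xy] e.
have := ble_wt xy; rewrite /wt in e * => wxy.
case: a b ab e => [] [] //= _ e; [|lia|]; congr (_ :: _); apply: IH => //; rewrite /wt; lia.
Qed.

Lemma blt_wt x y : blt x y -> wt x < wt y.
Proof.
case/andP=> xy /eqP ne; rewrite ltn_neqAle ble_wt // andbT.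
by apply/eqP=> /(ble_wt_eq xy).
Qed.

Lemma blt_ble x y : blt x y -> ble x y.
Proof. by case/andP. Qed.

Lemma blt_irr x : blt x x = false.
Proof. by rewrite /blt eqxx andbF. Qed.

Lemma blt_ble_trans x y z : blt x y -> ble y z -> blt x z.
Proof.
move=> xy yz; rewrite /blt (ble_trans (blt_ble xy) yz).
by apply/eqP=> exz; have := blt_wt xy; have := ble_wt yz; rewrite exz; lia.
Qed.

Lemma ble_blt_trans x y z : ble x y -> blt y z -> blt x z.
Proof.
move=> xy yz; rewrite /blt (ble_trans xy (blt_ble yz)).
by apply/eqP=> exz; have := blt_wt yz; have := ble_wt xy; rewrite exz; lia.
Qed.

Lemma blt_trans : transitive blt.
Proof. by move=> y x z /blt_ble xy; apply: ble_blt_trans. Qed.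

Lemma blt_asym x y : blt x y -> ble y x = false.
Proof. by move=> xy; apply/negP=> /(blt_ble_trans xy); rewrite blt_irr. Qed.

Lemma ble_size x y : ble x y -> size x = size y.
Proof. by rewrite /ble all2E => /andP[/eqP]. Qed.

Lemma covb_blt (M : pset) y x : covb M y x -> blt y x.
Proof. by case/andP. Qed.

Section Descent.

Variables (ltT : rel elt) (f : elt -> nat).
Hypothesis ltT_trans : transitive ltT.
Hypothesis ltT_measure : forall x y, ltT x y -> f x < f y.

Lemma exists_minimal (P : pred elt) (s : pset) z : z \in s -> P z ->
  exists2 m, m \in s & [&& P m, (m == z) || ltT m z & ~~ has (fun u => P u && ltT u m) s].
Proof.
move: {2}(f z).+1 (ltnSn (f z)) => n; elim: n z => [|n IH] z; first by rewrite ltn0.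
move=> fz zs Pz.
have [/hasP[u us /andP[Pu uz]]|zmin] := boolP (has (fun u => P u && ltT u z) s); last first.
  by exists z; rewrite ?Pz ?eqxx.
have [m ms /and3P[Pm mu mmin]] := IH u (leq_trans (ltT_measure uz) fz) us Pu.
exists m; rewrite ?Pm ?mmin //= andbT; apply/orP; right.
by case/orP: mu => [/eqP-> // | mu]; apply: ltT_trans mu uz.
Qed.

End Descent.

Lemma exists_minimal_below (P : pred elt) (s : pset) z : z \in s -> P z ->
  exists2 m, m \in s & [&& P m, ble m z & ~~ has (fun u => P u && blt u m) s].
Proof.
move=> zs Pz; have [m ms /and3P[Pm mz mmin]] := exists_minimal blt_trans blt_wt zs Pz.
exists m => //; rewrite Pm mmin andbT /=.
by case/orP: mz => [/eqP->|/blt_ble]; rewrite ?ble_refl.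
Qed.

Lemma exists_maximal_above (P : pred elt) (s : pset) z : z \in s -> P z ->
  exists2 m, m \in s & [&& P m, ble z m & ~~ has (fun u => P u && blt m u) s].
Proof.
have gt_trans : transitive (fun x y => blt y x) by move=> b a c ba cb; apply: blt_trans cb ba.
have gt_measure x y : blt y x -> size x - wt x < size y - wt y.
  move=> yx; rewrite (ble_size (blt_ble yx)); have := blt_wt yx; have := count_size id x.
  rewrite /wt; lia.
move=> zs Pz; have [m ms /and3P[Pm mz mmin]] := exists_minimal gt_trans gt_measure zs Pz.
exists m => //; rewrite Pm mmin andbT /=.
by case/orP: mz => [/eqP->|/blt_ble]; rewrite ?ble_refl.
Qed.

Lemma exists_lower_cover (L : pset) y z : z \in L -> blt z y ->
  exists2 w, w \in L & ble z w && covb L w y.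
Proof.
move=> zL zy; have [w wL /and3P[wy zw wmax]] := exists_maximal_above (P := blt^~ y) zL zy.
exists w; rewrite // zw /covb wy; apply: contra wmax => /hasP[u uL /andP[wu uy]].
by apply/hasP; exists u; rewrite ?uy.
Qed.

Lemma exists_upper_cover (L : pset) y z : z \in L -> blt y z ->
  exists2 w, w \in L & ble w z && covb L y w.
Proof.
move=> zL yz; have [w wL /and3P[yw wz wmin]] := exists_minimal_below (P := blt y) zL yz.
exists w; rewrite // wz /covb yw; apply: contra wmin => /hasP[u uL /andP[yu uw]].
by apply/hasP; exists u; rewrite ?yu.
Qed.

Definition minimal (L C : pset) y := (y \in C) && ~~ has (fun z => (z \in C) && blt z y) L.
Definition maximal (L C : pset) y := (y \in C) && ~~ has (fun z => (z \in C) && blt y z) L.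

Lemma has_lower_cover_convex (L C : pset) y : convex L C -> y \in C ->
  has (fun z => (z \in C) && covb L z y) L = has (fun z => (z \in C) && blt z y) L.
Proof.
move=> cv yC; apply/hasP/hasP => -[z zL /andP[zC zy]].
  by exists z; rewrite ?zC ?(covb_blt zy).
have [w wL /andP[zw wy]] := exists_lower_cover zL zy.
by exists w; rewrite ?wy ?andbT ?(cv z y w) ?(blt_ble (covb_blt wy)).
Qed.

Lemma has_upper_cover_convex (L C : pset) y : convex L C -> y \in C ->
  has (fun z => (z \in C) && covb L y z) L = has (fun z => (z \in C) && blt y z) L.
Proof.
move=> cv yC; apply/hasP/hasP => -[z zL /andP[zC yz]].
  by exists z; rewrite ?zC ?(covb_blt yz).
have [w wL /andP[wz yw]] := exists_upper_cover zL yz.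
by exists w; rewrite ?yw ?andbT ?(cv y z w) ?(blt_ble (covb_blt yw)).
Qed.

Section Extrema.

Variables (L C : pset).
Hypothesis subCL : {subset C <= L}.

Definition least a := (a \in C) /\ {in C, forall z, ble a z}.
Definition greatest b := (b \in C) /\ {in C, forall z, ble z b}.

Lemma exists_minimal_in z : z \in C -> exists2 m, minimal L C m & ble m z.
Proof.
move=> zC; have [m mL /and3P[mC mz mmin]] := exists_minimal_below (P := mem C) (subCL zC) zC.
by exists m => //; apply/andP.
Qed.

Lemma exists_maximal_in z : z \in C -> exists2 m, maximal L C m & ble z m.
Proof.
move=> zC; have [m mL /and3P[mC zm mmax]] := exists_maximal_above (P := mem C) (subCL zC) zC.
by exists m => //; apply/andP.
Qed.

Lemma count_minimal_gt0 : C != [::] -> 0 < count (minimal L C) L.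
Proof.
move=> nC; have /hasP[c cC _] : has predT C by rewrite has_predT lt0n size_eq0.
have [m /[dup] /andP[mC _] minm _] := exists_minimal_in cC.
by rewrite -has_count; apply/hasP; exists m; rewrite ?subCL.
Qed.

Lemma count_maximal_gt0 : C != [::] -> 0 < count (maximal L C) L.
Proof.
move=> nC; have /hasP[c cC _] : has predT C by rewrite has_predT lt0n size_eq0.
have [m /[dup] /andP[mC _] maxm _] := exists_maximal_in cC.
by rewrite -has_count; apply/hasP; exists m; rewrite ?subCL.
Qed.

Hypothesis uniqL : uniq L.

Lemma count_minimal_eq1 : count (minimal L C) L = 1 <-> exists a, least a.
Proof.
split=> [c1|[a [aC lea]]].
  have /hasP[m0 m0L minm0] : has (minimal L C) L by rewrite has_count c1.
  exists m0; split; first by case/andP: minm0.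
  move=> z zC; have [m /[dup] /andP[mC _] minm mz] := exists_minimal_in zC.
  by rewrite -(count_eq1_inj c1 (subCL mC) m0L minm minm0).
apply/eqP; rewrite eqn_leq count_minimal_gt0 ?andbT; last first.
  by apply: contraTneq aC => ->.
rewrite -(count_mem_eq1 uniqL (subCL aC)); apply: sub_count => m /andP[mC /hasPn mmin].
have am := lea m mC; apply/eqP/ble_anti => //.
case: (eqVneq a m) => [->|nam]; first exact: ble_refl.
by move: (mmin a (subCL aC)); rewrite aC /blt am nam.
Qed.

Lemma count_maximal_eq1 : count (maximal L C) L = 1 <-> exists b, greatest b.
Proof.
split=> [c1|[b [bC geb]]].
  have /hasP[m0 m0L maxm0] : has (maximal L C) L by rewrite has_count c1.
  exists m0; split; first by case/andP: maxm0.
  move=> z zC; have [m /[dup] /andP[mC _] maxm zm] := exists_maximal_in zC.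
  by rewrite -(count_eq1_inj c1 (subCL mC) m0L maxm maxm0).
apply/eqP; rewrite eqn_leq count_maximal_gt0 ?andbT; last first.
  by apply: contraTneq bC => ->.
rewrite -(count_mem_eq1 uniqL (subCL bC)); apply: sub_count => m /andP[mC /hasPn mmax].
have mb := geb m mC; apply/eqP/ble_anti => //.
case: (eqVneq m b) => [->|nmb]; first exact: ble_refl.
by move: (mmax b (subCL bC)); rewrite bC /blt mb nmb.
Qed.

End Extrema.

Section PseudoIntervals.

Variables (L C : pset).
Hypotheses (subCL : {subset C <= L}) (convexC : convex L C).

Lemma lower_pseudo_interval_least : lower_pseudo_interval L C <-> exists a, least C a.
Proof.
split=> [[a [bs [aL nbs hbs hC]]]|[a [aC lea]]].
  exists a; split; last by move=> z /hC[b _]; rewrite mem_filter => /andP[/andP[]].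
  have /hasP[b bbs _] : has predT bs by rewrite has_predT lt0n size_eq0.
  by apply/hC; exists b; rewrite // mem_filter ble_refl aL (hbs b bbs).2.
exists a, C; split; rewrite ?subCL //; first by apply: contraTneq aC => ->.
  by move=> b bC; rewrite subCL ?lea.
move=> z; split=> [zC|[b bC]]; first by exists z; rewrite // mem_filter ble_refl lea ?subCL.
by rewrite mem_filter => /andP[/andP[az zb] zL]; apply: (convexC aC bC).
Qed.

Lemma upper_pseudo_interval_greatest : upper_pseudo_interval L C <-> exists b, greatest C b.
Proof.
split=> [[b [as_ [bL nas has_ hC]]]|[b [bC geb]]].
  exists b; split; last by move=> z /hC[a _]; rewrite mem_filter => /andP[/andP[]].
  have /hasP[a aas _] : has predT as_ by rewrite has_predT lt0n size_eq0.
  by apply/hC; exists a; rewrite // mem_filter ble_refl bL (has_ a aas).2.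
exists b, C; split; rewrite ?subCL //; first by apply: contraTneq bC => ->.
  by move=> a aC; rewrite subCL ?geb.
move=> z; split=> [zC|[a aC]]; first by exists z; rewrite // mem_filter ble_refl geb ?subCL.
by rewrite mem_filter => /andP[/andP[az zb] zL]; apply: (convexC aC bC).
Qed.

Lemma is_interval_least_greatest :
  is_interval L C <-> (exists a, least C a) /\ (exists b, greatest C b).
Proof.
split=> [[a [b [aL bL ab hC]]]|[[a [aC lea]] [b [bC geb]]]].
  split; [exists a | exists b]; split; rewrite ?hC ?mem_filter ?ble_refl ?aL ?bL ?ab //;
  by move=> z; rewrite hC mem_filter => /andP[/andP[]].
exists a, b; split; rewrite ?subCL ?lea //.
move=> z; rewrite mem_filter; apply/idP/idP => [zC|/andP[/andP[az zb] zL]].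
  by rewrite lea ?geb ?subCL.
exact: (convexC aC bC).
Qed.

Lemma is_interval_pseudo_intervals :
  is_interval L C <-> lower_pseudo_interval L C /\ upper_pseudo_interval L C.
Proof.
rewrite lower_pseudo_interval_least upper_pseudo_interval_greatest.
exact: is_interval_least_greatest.
Qed.

End PseudoIntervals.

(** * Chains and length *)

Definition unordered_chain (L s : pset) :=
  [/\ uniq s, {subset s <= L} & {in s &, forall x y, ble x y || ble y x}].

Lemma is_chain_unordered (L s : pset) : is_chain L s -> unordered_chain L s.
Proof.
case=> /allP sL lt_s; split=> //; first exact: (@sorted_uniq _ blt blt_trans blt_irr s lt_s).
have le_s : sorted ble s := sub_sorted blt_ble lt_s.
move=> x y xs ys; have le_index := sorted_leq_index ble_trans ble_refl le_s.
by case: (leqP (index x s) (index y s)) => [|/ltnW] /le_index-> //; rewrite orbT.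
Qed.

Lemma unordered_chain_sort (L s : pset) : unordered_chain L s ->
  exists2 t, is_chain L t & perm_eq t s.
Proof.
case=> us sL tot; exists (sort ble s); last exact: permEl (perm_sort ble s).
split; first by apply/allP => x; rewrite mem_sort => /sL.
have le_t : sorted ble (sort ble s) by apply: (sort_sorted_in (P := mem s)) => //; apply/allP.
rewrite (sorted_pairwise blt_trans) [pairwise _ _](_ : _ = pairwise ble (sort ble s) && uniq (sort ble s)).
  by rewrite -(sorted_pairwise ble_trans) le_t sort_uniq.
by rewrite uniq_pairwise -pairwise_relI.
Qed.

Lemma poset_length_unique (L : pset) l l' : poset_length L l -> poset_length L l' -> l = l'.
Proof.
case=> [[s [cs ss]] hs] [[s' [cs' ss']] hs'].
by have := hs _ cs'; have := hs' _ cs; rewrite ss ss'; lia.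
Qed.

Lemma unordered_chain_size (L s : pset) l :
  poset_length L l -> unordered_chain L s -> size s <= l.+1.
Proof. by case=> _ hb /unordered_chain_sort[t ct /perm_size <-]; apply: hb. Qed.

Lemma in_spine_unordered (L s : pset) l x : poset_length L l ->
  unordered_chain L s -> size s = l.+1 -> x \in s -> in_spine L x.
Proof.
move=> pl /unordered_chain_sort[t ct pts] ss xs.
by exists l, t; rewrite (perm_size pts) (perm_mem pts).
Qed.

Lemma poset_length_unordered (L : pset) l :
  (exists2 s, unordered_chain L s & size s = l.+1) ->
  (forall s, unordered_chain L s -> size s <= l.+1) -> poset_length L l.
Proof.
move=> [s /unordered_chain_sort[t ct pts] ss] hb; split.
  by exists t; rewrite (perm_size pts).
by move=> s' /is_chain_unordered/hb.
Qed.

Lemma poset_length_E0 : poset_length E0 0.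
Proof.
apply: poset_length_unordered => [|s [us sE _]]; last exact: uniq_leq_size us sE.
by exists E0 => //; split => // x y; rewrite !inE => /eqP-> /eqP->.
Qed.

(** * The doubling L[C] *)

(* [below C] is I_L(C); the doubling L[C] consists of the copies [lo y] = (y,0) for
   [below C y] and [hi y] = (y,1) for [layer1 C y], i.e. y in (L \ I_L(C)) u C. *)
Definition below (C : pset) (y : elt) := has (ble y) C.
Definition layer1 (C : pset) (y : elt) := ~~ below C y || (y \in C).
Definition lo (y : elt) := rcons y false.
Definition hi (y : elt) := rcons y true.

Lemma below_mem (C : pset) y : y \in C -> below C y.
Proof. by move=> yC; apply/hasP; exists y; rewrite ?ble_refl. Qed.

Lemma below_trans (C : pset) y z : ble y z -> below C z -> below C y.
Proof. by move=> yz /hasP[c cC zc]; apply/hasP; exists c; rewrite ?(ble_trans yz). Qed.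

Lemma layer1_mem (C : pset) y : y \in C -> layer1 C y.
Proof. by rewrite /layer1 => ->; rewrite orbT. Qed.

Lemma layer1_below (C : pset) y : below C y -> layer1 C y = (y \in C).
Proof. by rewrite /layer1 => ->. Qed.

Lemma layer1_notbelow (C : pset) y : ~~ below C y -> layer1 C y.
Proof. by rewrite /layer1 => ->. Qed.

Lemma convex_below (L C : pset) y w : convex L C ->
  y \in C -> w \in L -> ble y w -> below C w -> w \in C.
Proof. by move=> cv yC wL yw /hasP[c cC wc]; apply: (cv y c w). Qed.

Lemma layer1_trans (L C : pset) y z : convex L C ->
  ble y z -> z \in L -> layer1 C y -> layer1 C z.
Proof.
move=> cv yz zL; case Bz: (below C z); last by rewrite (layer1_notbelow (y := z)) ?Bz.
rewrite !layer1_below ?(below_trans yz) // => yC.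
exact: convex_below cv yC zL yz Bz.
Qed.

Lemma ble_lo y z : ble (lo y) (lo z) = ble y z.
Proof. by rewrite ble_rcons andbT. Qed.
Lemma ble_hi y z : ble (hi y) (hi z) = ble y z.
Proof. by rewrite ble_rcons andbT. Qed.
Lemma ble_lohi y z : ble (lo y) (hi z) = ble y z.
Proof. by rewrite ble_rcons andbT. Qed.
Lemma ble_hilo y z : ble (hi y) (lo z) = false.
Proof. by rewrite ble_rcons andbF. Qed.

Lemma blt_lo y z : blt (lo y) (lo z) = blt y z.
Proof. by rewrite /blt ble_lo (inj_eq (@rcons_injl _ _)). Qed.
Lemma blt_hi y z : blt (hi y) (hi z) = blt y z.
Proof. by rewrite /blt ble_hi (inj_eq (@rcons_injl _ _)). Qed.
Lemma lo_neq_hi y z : lo y != hi z.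
Proof. by apply/eqP => /rcons_inj. Qed.
Lemma blt_lohi y z : blt (lo y) (hi z) = ble y z.
Proof. by rewrite /blt ble_lohi lo_neq_hi andbT. Qed.
Lemma blt_hilo y z : blt (hi y) (lo z) = false.
Proof. by rewrite /blt ble_hilo. Qed.

Definition nlower (M : pset) x := count (fun z => covb M z x) M.
Definition nupper (M : pset) x := count (fun z => covb M x z) M.

Lemma n_join_irrE (M : pset) : uniq M -> n_join_irr M = count (fun x => nlower M x == 1) M.
Proof. by move=> uM; rewrite /n_join_irr undup_id //; apply: eq_count => x; rewrite size_filter. Qed.

Lemma n_meet_irrE (M : pset) : uniq M -> n_meet_irr M = count (fun x => nupper M x == 1) M.
Proof. by move=> uM; rewrite /n_meet_irr undup_id //; apply: eq_count => x; rewrite size_filter. Qed.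

Section Doubling.

Variables (L C : pset).
Hypothesis uniqL : uniq L.

Lemma double_eq :
  double L C = map lo [seq y <- L | below C y] ++ map hi [seq y <- L | layer1 C y].
Proof.
have inD y : y \in L -> (y \in downset L C) = below C y.
  by move=> yL; rewrite mem_filter yL andbT.
rewrite /double.
have -> : [seq y <- L | y \in downset L C] = [seq y <- L | below C y].
  exact: eq_in_filter.
have -> : [seq y <- L | (y \notin downset L C) || (y \in C)] = [seq y <- L | layer1 C y].
  by apply: eq_in_filter => y yL; rewrite inD.
rewrite undup_id // cat_uniq !(map_inj_uniq (@rcons_injl _ _)) ?filter_uniq //= andbT.
by apply/hasP => -[_ /mapP[y _ ->] /mapP[z _ /rcons_inj[]]].
Qed.

Lemma mem_double y b :
  (rcons y b \in double L C) = (y \in L) && (if b then layer1 C y else below C y).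
Proof.
rewrite double_eq mem_cat.
have mem_map_rcons b' s : (rcons y b \in map (rcons^~ b') s) = (b == b') && (y \in s).
  apply/mapP/andP => [[z zs /rcons_inj[-> ->]]|[/eqP-> ys]]; last by exists y.
  by rewrite eqxx.
by rewrite !mem_map_rcons !mem_filter; case: b {mem_map_rcons}; rewrite /= ?orbF // andbC.
Qed.

Lemma count_double (p : pred elt) : count p (double L C) =
  count (fun y => below C y && p (lo y)) L + count (fun y => layer1 C y && p (hi y)) L.
Proof.
rewrite double_eq count_cat !count_map !count_filter.
by congr (_ + _); apply: eq_count => y /=; rewrite andbC.
Qed.

Lemma has_double (p : pred elt) : has p (double L C) =
  has (fun y => below C y && p (lo y)) L || has (fun y => layer1 C y && p (hi y)) L.
Proof. by rewrite !has_count count_double; lia. Qed.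

Lemma covb_double x y : covb (double L C) x y =
  [&& blt x y, ~~ has (fun w => below C w && (blt x (lo w) && blt (lo w) y)) L
             & ~~ has (fun w => layer1 C w && (blt x (hi w) && blt (hi w) y)) L].
Proof. by rewrite /covb has_double negb_or. Qed.

Lemma covb_double_lo y z : below C y -> covb (double L C) (lo z) (lo y) = covb L z y.
Proof.
move=> By; rewrite covb_double blt_lo /covb.
have -> : has (fun w => layer1 C w && (blt (lo z) (hi w) && blt (hi w) (lo y))) L = false.
  by apply/hasPn => w _; rewrite blt_hilo !andbF.
rewrite andbT.
congr (_ && ~~ _); apply: eq_has => w /=; rewrite !blt_lo.
by case wy: (blt w y); rewrite ?andbF // andbT (below_trans (blt_ble wy) By).
Qed.

Lemma covb_double_hilo y z : covb (double L C) (hi z) (lo y) = false.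
Proof. by rewrite covb_double blt_hilo. Qed.

Hypothesis convexC : convex L C.

Lemma covb_double_hi y z : layer1 C z -> covb (double L C) (hi z) (hi y) = covb L z y.
Proof.
move=> Uz; rewrite covb_double blt_hi /covb.
have -> : has (fun w => below C w && (blt (hi z) (lo w) && blt (lo w) (hi y))) L = false.
  by apply/hasPn => w _; rewrite blt_hilo /= andbF.
congr (_ && ~~ _); apply/hasP/hasP => -[w wL].
  by rewrite !blt_hi => /andP[_ hw]; exists w.
move=> /andP[zw wy]; exists w => //.
by rewrite !blt_hi zw wy (layer1_trans convexC (blt_ble zw) wL Uz).
Qed.

(* (y,0) is always covered by (y,1); otherwise (z,0) < (y,1) can only be a cover
   when neither (z,1) nor (y,0) exists. *)
Lemma covb_double_lohi y z : z \in L -> y \in L -> below C z -> layer1 C y ->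
  covb (double L C) (lo z) (hi y) = (z == y) || [&& covb L z y, z \notin C & ~~ below C y].
Proof.
move=> zL yL Bz Uy; rewrite covb_double blt_lohi.
apply/and3P/idP => [[zy /hasPn no_lo /hasPn no_hi]|].
  case: eqVneq => //= nzy; have zy' : blt z y by rewrite /blt zy nzy.
  have zC : z \notin C.
    by apply/negP=> zC; move: (no_hi z zL); rewrite layer1_mem // blt_lohi ble_refl blt_hi zy'.
  have nBy : ~~ below C y.
    apply/negP=> By.
    by move: (no_lo y yL); rewrite By blt_lo zy' blt_lohi ble_refl.
  rewrite zC nBy /covb zy' !andbT /=; apply/hasPn => w wL; apply/negP => /andP[zw wy].
  case Bw: (below C w).
    by move: (no_lo w wL); rewrite Bw blt_lo zw blt_lohi (blt_ble wy).
  by move: (no_hi w wL); rewrite layer1_notbelow ?Bw // blt_lohi (blt_ble zw) blt_hi wy.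
case/orP => [/eqP<-|/and3P[/andP[zy /hasPn cov] zC nBy]].
  rewrite ble_refl; split => //; apply/hasPn => w _; apply/negP.
    by rewrite blt_lo blt_lohi => /and3P[_ zw]; rewrite (blt_asym zw).
  by rewrite blt_lohi blt_hi => /and3P[_ zw /blt_asym]; rewrite zw.
split; rewrite ?(blt_ble zy) //; apply/hasPn => w wL; apply/negP.
  rewrite blt_lo blt_lohi => /and3P[Bw zw wy].
  have nwy : w != y by apply: contraNneq nBy => <-.
  by move: (cov w wL); rewrite zw /blt wy nwy.
rewrite blt_lohi blt_hi => /and3P[Uw zw wy].
have nzw : z != w by apply: contraNneq zC => ezw; rewrite -(layer1_below Bz) ezw.
by move: (cov w wL); rewrite wy andbT /blt zw nzw.
Qed.

Hypothesis subCL : {subset C <= L}.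

Lemma nlower_double_lo y : below C y -> nlower (double L C) (lo y) = nlower L y.
Proof.
move=> By; rewrite /nlower count_double -[RHS]addn0 -(count_pred0 L).
apply: count_addE => z zL /=; rewrite covb_double_hilo covb_double_lo // andbF addn0 addn0.
have [zy|_] := boolP (covb L z y); rewrite ?andbF ?andbT //.
by rewrite (below_trans (blt_ble (covb_blt zy)) By).
Qed.

Lemma nlower_double_hi y : y \in L -> ~~ below C y -> nlower (double L C) (hi y) = nlower L y.
Proof.
move=> yL nBy; rewrite /nlower count_double -[RHS]addn0 -(count_pred0 L).
apply: count_addE => z zL /=; rewrite addn0.
have [Bz|nBz] := boolP (below C z); last first.
  by have Uz := layer1_notbelow nBz; rewrite Uz covb_double_hi.
have nzy : (z == y) = false by apply: contraNF nBy => /eqP<-.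
have Uy := layer1_notbelow nBy.
rewrite covb_double_lohi // nzy nBy andbT /= layer1_below //.
have [zC|_] := boolP (z \in C); last by rewrite andbT addn0.
by rewrite andbF covb_double_hi ?layer1_mem.
Qed.

Lemma nlower_double_hi_mem y : y \in C ->
  nlower (double L C) (hi y) = (count (fun z => (z \in C) && covb L z y) L).+1.
Proof.
move=> yC; have By := below_mem yC; rewrite /nlower count_double addnC -addn1.
congr (_ + _).
  apply: eq_in_count => z zL /=.
  have [zy|nzy] := boolP (covb L z y); last first.
    by rewrite andbF; case: (boolP (layer1 C z)) => //= Uz; rewrite covb_double_hi // (negbTE nzy).
  have Bz := below_trans (blt_ble (covb_blt zy)) By.
  rewrite layer1_below // andbT; have [zC|//] := boolP (z \in C).
  by rewrite covb_double_hi ?layer1_mem.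
rewrite -(count_mem_eq1 uniqL (subCL yC)).
apply: eq_in_count => z zL /=.
have [Bz|nBz] := boolP (below C z).
  by rewrite covb_double_lohi ?(subCL yC) ?layer1_mem // By /= !andbF orbF.
by apply/esym/eqP => ezy; rewrite ezy By in nBz.
Qed.

Lemma nupper_double_hi y : layer1 C y -> nupper (double L C) (hi y) = nupper L y.
Proof.
move=> Uy; rewrite /nupper count_double -[RHS]add0n -(count_pred0 L).
apply: count_addE => z zL /=; rewrite covb_double_hilo andbF covb_double_hi //.
have [yz|_] := boolP (covb L y z); rewrite ?andbF ?andbT //.
by rewrite (layer1_trans convexC (blt_ble (covb_blt yz)) zL Uy).
Qed.

Lemma nupper_double_lo y : y \in L -> below C y -> y \notin C ->
  nupper (double L C) (lo y) = nupper L y.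
Proof.
move=> yL By yC; rewrite /nupper count_double -[RHS]addn0 -(count_pred0 L).
apply: count_addE => z zL /=; rewrite addn0.
have [Bz|nBz] := boolP (below C z).
  rewrite covb_double_lo // layer1_below //; have [zC|_] := boolP (z \in C); last by rewrite addn0.
  have nyz : (y == z) = false by apply: contraNF yC => /eqP->.
  by rewrite covb_double_lohi ?layer1_mem // nyz yC Bz /= !andbF addn0.
have nyz : (y == z) = false by apply: contraNF nBz => /eqP<-.
by rewrite covb_double_lohi ?layer1_notbelow // nyz yC nBz /= !andbT.
Qed.

Lemma nupper_double_lo_mem y : y \in C ->
  nupper (double L C) (lo y) = (count (fun z => (z \in C) && covb L y z) L).+1.
Proof.
move=> yC; have By := below_mem yC; rewrite /nupper count_double -addn1.
congr (_ + _).
  apply: eq_in_count => z zL /=.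
  have [Bz|nBz] := boolP (below C z); last first.
    by have [/below_mem zC|] := boolP (z \in C); rewrite ?zC in nBz.
  rewrite covb_double_lo //; have [yz|_] := boolP (covb L y z); rewrite ?andbF ?andbT //.
  by rewrite (convex_below convexC yC zL (blt_ble (covb_blt yz)) Bz).
rewrite -(count_mem_eq1 uniqL (subCL yC)).
apply: eq_in_count => z zL /=.
have [Uz|nUz] := boolP (layer1 C z).
  by rewrite covb_double_lohi ?(subCL yC) // yC /= !andbF orbF eq_sym.
by apply/esym/eqP => ezy; rewrite ezy layer1_mem in nUz.
Qed.

Lemma n_join_irr_double :
  n_join_irr (double L C) = n_join_irr L + count (minimal L C) L.
Proof.
rewrite !n_join_irrE ?undup_uniq // count_double; apply: count_addE => y yL /=.
rewrite /minimal; have [By|nBy] := boolP (below C y); last first.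
  have yC : y \in C = false by apply: contraNF nBy; apply: below_mem.
  by rewrite nlower_double_hi // layer1_notbelow // yC addn0.
rewrite nlower_double_lo // layer1_below //; have [yC|_] := boolP (y \in C); last by [].
by rewrite nlower_double_hi_mem // eqSS eqn0Ngt -has_count has_lower_cover_convex.
Qed.

Lemma n_meet_irr_double :
  n_meet_irr (double L C) = n_meet_irr L + count (maximal L C) L.
Proof.
rewrite !n_meet_irrE ?undup_uniq // count_double; apply: count_addE => y yL /=.
rewrite /maximal; have [By|nBy] := boolP (below C y); last first.
  have yC : y \in C = false by apply: contraNF nBy; apply: below_mem.
  by rewrite nupper_double_hi ?layer1_notbelow // yC addn0.
rewrite layer1_below //; have [yC|yC] := boolP (y \in C); last first.
  by rewrite nupper_double_lo // !addn0.
rewrite nupper_double_lo_mem // nupper_double_hi ?layer1_mem // addnC.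
by rewrite eqSS eqn0Ngt -has_count has_upper_cover_convex.
Qed.

Definition embed y := rcons y (~~ below C y).

Lemma embed_chain s : unordered_chain L s -> unordered_chain (double L C) (map embed s).
Proof.
case=> us sL tot; split.
- by rewrite map_inj_uniq // => y z /rcons_inj[].
- move=> _ /mapP[y ys ->]; rewrite /embed mem_double sL //=.
  by case: (boolP (below C y)) => //= /layer1_notbelow.
- move=> _ _ /mapP[y ys ->] /mapP[z zs ->]; rewrite !ble_rcons.
  have mono a b : ble a b -> ~~ below C a ==> ~~ below C b.
    by move=> ab; apply/implyP; apply: contra => /(below_trans ab).
  case/orP: (tot y z ys zs) => [yz|zy]; first by rewrite yz (mono _ _ yz).
  by rewrite zy (mono _ _ zy) orbT.
Qed.

Lemma split_chain s c : c \in C -> c \in s -> unordered_chain L s ->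
  let t := map lo [seq y <- s | ble y c] ++ map hi [seq y <- s | ble c y] in
  unordered_chain (double L C) t /\ size t = (size s).+1.
Proof.
move=> cC cs [us sL tot] t; split; first split.
- rewrite cat_uniq !(map_inj_uniq (@rcons_injl _ _)) ?filter_uniq //= andbT.
  by apply/hasP => -[_ /mapP[y _ ->] /mapP[z _ /rcons_inj[]]].
- move=> x; rewrite mem_cat => /orP[] /mapP[y]; rewrite mem_filter => /andP[h ys] ->.
    by rewrite mem_double sL //= (below_trans h (below_mem cC)).
  by rewrite mem_double sL //= (layer1_trans convexC h (sL y ys) (layer1_mem cC)).
- move=> x1 x2; rewrite !mem_cat => /orP[] /mapP[y]; rewrite mem_filter => /andP[yc ys] ->
    /orP[] /mapP[z]; rewrite mem_filter => /andP[zc zs] ->;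
    rewrite ?ble_lo ?ble_hi ?ble_lohi ?ble_hilo ?tot //.
    by rewrite (ble_trans yc zc).
  by rewrite (ble_trans zc yc).
rewrite size_cat !size_map !size_filter -addn1 -(count_predUI (ble^~ c) (ble c)).
congr (_ + _).
  by rewrite -count_predT; apply: eq_in_count => y ys /=; rewrite orbC tot.
rewrite -(count_mem_eq1 us cs); apply: eq_count => y /=.
by apply/andP/eqP => [[yc cy]|->]; [apply: ble_anti | rewrite ble_refl].
Qed.

Definition shadow (s : pset) := [seq y <- L | (lo y \in s) || (hi y \in s)].
Definition doubled (s : pset) y := (lo y \in s) && (hi y \in s).

Lemma shadow_chain s : unordered_chain (double L C) s -> unordered_chain L (shadow s).
Proof.
case=> _ _ tot; split => [|y|y z]; rewrite ?filter_uniq //; first by rewrite mem_filter => /andP[].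
have copy x : x \in shadow s -> exists b, rcons x b \in s.
  by rewrite mem_filter => /andP[/orP[]]; [exists false | exists true].
move=> /copy[a ya] /copy[b zb].
by case/orP: (tot _ _ ya zb); rewrite ble_rcons => /andP[-> _]; rewrite ?orbT.
Qed.

Lemma size_shadow s : unordered_chain (double L C) s ->
  size s = size (shadow s) + count (doubled s) L.
Proof.
case=> us sD _; have uD : uniq (double L C) := undup_uniq _.
have -> : size s = count (mem s) (double L C).
  rewrite -size_filter; apply/perm_size/uniq_perm; rewrite ?filter_uniq //.
  by move=> x; rewrite mem_filter; apply/idP/andP => [xs|[]//]; split => //; apply: sD.
have in_layer b y : rcons y b \in s -> if b then layer1 C y else below C y.
  by move/sD; rewrite mem_double => /andP[].
rewrite count_double size_filter.
have -> : count (fun y => below C y && (lo y \in s)) L = count (fun y => lo y \in s) L.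
  by apply: eq_count => y; case: (boolP (lo y \in s)) => [/(in_layer false)->|]; rewrite ?andbF.
have -> : count (fun y => layer1 C y && (hi y \in s)) L = count (fun y => hi y \in s) L.
  by apply: eq_count => y; case: (boolP (hi y \in s)) => [/(in_layer true)->|]; rewrite ?andbF.
by rewrite -count_predUI.
Qed.

Lemma count_doubled_le1 s : unordered_chain (double L C) s -> count (doubled s) L <= 1.
Proof.
case=> _ _ tot; have [/hasP[c cL /andP[c0 c1]]|] := boolP (has (doubled s) L); last first.
  by rewrite has_count -leqNgt => /leq_trans->.
rewrite -(count_mem_eq1 uniqL cL); apply: sub_count => y /andP[y0 y1] /=.
apply/eqP/ble_anti.
  by case/orP: (tot _ _ y0 c1); rewrite ?ble_lohi ?ble_hilo.
by case/orP: (tot _ _ c0 y1); rewrite ?ble_lohi ?ble_hilo.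
Qed.

Lemma doubled_mem s y : {subset s <= double L C} -> doubled s y -> y \in C.
Proof.
move=> sD /andP[/sD y0 /sD y1]; move: y0 y1; rewrite !mem_double => /andP[_ By] /andP[_].
by rewrite layer1_below.
Qed.

Lemma poset_length_double_spine l :
  poset_length L l -> meets_spine L C -> poset_length (double L C) l.+1.
Proof.
move=> pl [c cC [l' [s [pl' /is_chain_unordered cs ss c_s]]]].
rewrite (poset_length_unique pl' pl) in ss.
apply: poset_length_unordered => [|s' cs'].
  by have [ct st] := split_chain cC c_s cs; eexists; [exact: ct | rewrite st ss].
rewrite (size_shadow cs') -addn1 leq_add ?count_doubled_le1 //.
exact: unordered_chain_size pl (shadow_chain cs').
Qed.

Lemma poset_length_double_nospine l :
  poset_length L l -> ~ meets_spine L C -> poset_length (double L C) l.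
Proof.
move=> pl nm; apply: poset_length_unordered => [|s' cs'].
  case: pl => -[s [/is_chain_unordered cs ss]] _.
  by exists (map embed s); [exact: embed_chain | rewrite size_map ss].
have ct := shadow_chain cs'; have bound := unordered_chain_size pl ct.
rewrite (size_shadow cs'); case: (boolP (has (doubled s') L)) => [|no].
  have [_ s'D _] := cs'.
  case/hasP=> c cL dc; have cC := doubled_mem s'D dc.
  have ct_c : c \in shadow s' by rewrite mem_filter cL; case/andP: dc => ->.
  have short : size (shadow s') != l.+1.
    by apply/eqP => full; apply: nm; exists c => //; apply: in_spine_unordered pl ct full ct_c.
  by have := count_doubled_le1 cs'; move: bound short; lia.
by move: no; rewrite has_count -leqNgt leqn0 => /eqP->; rewrite addn0.
Qed.

End Doubling.

(** * Induction along E[C_1, ..., C_n] *)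

Lemma n_join_irr_double_step (L C : pset) : uniq L -> {subset C <= L} -> convex L C ->
  C != [::] -> exists2 k, n_join_irr (double L C) = n_join_irr L + k.+1 &
  (k = 0 <-> lower_pseudo_interval L C).
Proof.
move=> uL sub cv nC; have pos := count_minimal_gt0 sub nC.
exists (count (minimal L C) L).-1; first by rewrite n_join_irr_double // prednK.
rewrite (lower_pseudo_interval_least sub cv) -(count_minimal_eq1 sub uL); split=> ?; lia.
Qed.

Lemma n_meet_irr_double_step (L C : pset) : uniq L -> {subset C <= L} -> convex L C ->
  C != [::] -> exists2 k, n_meet_irr (double L C) = n_meet_irr L + k.+1 &
  (k = 0 <-> upper_pseudo_interval L C).
Proof.
move=> uL sub cv nC; have pos := count_maximal_gt0 sub nC.
exists (count (maximal L C) L).-1; first by rewrite n_meet_irr_double // prednK.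
rewrite (upper_pseudo_interval_greatest sub cv) -(count_maximal_eq1 sub uL); split=> ?; lia.
Qed.

Lemma n_join_irr_E0 : n_join_irr E0 = 0.
Proof. by []. Qed.

Lemma n_meet_irr_E0 : n_meet_irr E0 = 0.
Proof. by []. Qed.

Lemma build_rcons (Cs : seq pset) C : build (rcons Cs C) = double (build Cs) C.
Proof. by rewrite /build foldl_rcons. Qed.

Lemma build_uniq (Cs : seq pset) : uniq (build Cs).
Proof. by case/lastP: Cs => [|Cs C] //; rewrite build_rcons undup_uniq. Qed.

Definition all_steps (P : pset -> pset -> Prop) (Cs : seq pset) i :=
  forall j, j < i -> P (build (take j Cs)) (nth [::] Cs j).

Lemma all_stepsS P (Cs : seq pset) i :
  all_steps P Cs i.+1 <-> all_steps P Cs i /\ P (build (take i Cs)) (nth [::] Cs i).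
Proof.
split=> [h|[h hi] j]; first by split=> [j ji|]; apply: h; rewrite // ltnS ltnW.
by rewrite ltnS leq_eqVlt => /orP[/eqP->|/h].
Qed.

Section Extremality.

Variables (nirr : pset -> nat) (shape : pset -> pset -> Prop).
Hypothesis nirr_E0 : nirr E0 = 0.
Hypothesis nirr_double : forall L C, uniq L -> {subset C <= L} -> convex L C ->
  C != [::] -> exists2 k, nirr (double L C) = nirr L + k.+1 & (k = 0 <-> shape L C).

Lemma extremality_defect (Cs : seq pset) : valid_cn Cs -> forall i, i <= size Cs ->
  let Li := build (take i Cs) in
  exists l, [/\ poset_length Li l, l <= nirr Li &
    l = nirr Li <-> all_steps shape Cs i /\ all_steps meets_spine Cs i].
Proof.
move=> HCs; elim=> [_|i IH lti] /=.
  by exists 0; rewrite take0 /build /= nirr_E0; split=> //; apply: poset_length_E0.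
have /= [l [pl le_l IHe]] := IH (ltnW lti).
have [nC sub cv] := HCs i lti.
rewrite (take_nth [::] lti) build_rcons.
have [k -> ek] := nirr_double (build_uniq _) sub cv nC.
case: (classic (meets_spine (build (take i Cs)) (nth [::] Cs i))) => m.
  have pl' := poset_length_double_spine (build_uniq _) cv pl m.
  exists l.+1; split=> //; first lia.
  split=> [e|[/all_stepsS[sh shi] /all_stepsS[me _]]].
    have [sh me] : all_steps shape Cs i /\ all_steps meets_spine Cs i by apply/IHe; lia.
    by split; apply/all_stepsS; split; rewrite // -ek; lia.
  by rewrite -(IHe.2 (conj sh me)) (ek.2 shi) addn1.
have pl' := poset_length_double_nospine (build_uniq _) pl m.
exists l; split=> //; first lia.
by split=> [|[_ /all_stepsS[]]] //; lia.
Qed.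

End Extremality.

Theorem proposition3p11 (Cs : seq pset) (HCs : valid_cn Cs) :
  let L := build Cs in
  let Li i := build (take i Cs) in
  let C i := nth [::] Cs i in
  (join_extremal L <->
     (forall i, i < size Cs -> lower_pseudo_interval (Li i) (C i)) /\
     (forall i, i < size Cs -> meets_spine (Li i) (C i))) /\
  (meet_extremal L <->
     (forall i, i < size Cs -> upper_pseudo_interval (Li i) (C i)) /\
     (forall i, i < size Cs -> meets_spine (Li i) (C i))) /\
  (extremal L <->
     (forall i, i < size Cs -> is_interval (Li i) (C i)) /\
     (forall i, i < size Cs -> meets_spine (Li i) (C i))).
Proof.
move=> L Li C.
have /= [lj [plj _ ej]] := extremality_defect n_join_irr_E0 n_join_irr_double_step HCs (leqnn _).
have /= [lm [plm _ em]] := extremality_defect n_meet_irr_E0 n_meet_irr_double_step HCs (leqnn _).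
rewrite take_size in plj ej plm em.
have join : join_extremal L <-> all_steps lower_pseudo_interval Cs (size Cs) /\
                               all_steps meets_spine Cs (size Cs).
  by split=> [/(poset_length_unique plj)/ej //|/ej ej']; rewrite /join_extremal -ej'.
have meet : meet_extremal L <-> all_steps upper_pseudo_interval Cs (size Cs) /\
                               all_steps meets_spine Cs (size Cs).
  by split=> [/(poset_length_unique plm)/em //|/em em']; rewrite /meet_extremal -em'.
have interval i : i < size Cs -> is_interval (Li i) (C i) <->
    lower_pseudo_interval (Li i) (C i) /\ upper_pseudo_interval (Li i) (C i).
  by move=> lti; have [_ sub cv] := HCs i lti; apply: is_interval_pseudo_intervals.
split=> //; split=> //; split=> [[/join[lpi sp] /meet[upi _]]|[int sp]].
  by split=> // i lti; apply/interval => //; split; [apply: lpi | apply: upi].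
have pseudo i (lti : i < size Cs) := (interval i lti).1 (int i lti).
by split; [apply/join | apply/meet]; split=> // i lti; case: (pseudo i lti).
Qed.
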